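(* Let $G$ be a simple graph and $S\subset V(G)$ a set of pairwise non-adjacent vertices. If $G$ is $k$-shellable, then $G\setminus N_G[S]$ is $k$-shellable.
   Context: $N_G[S]=\bigcup_{x\in S}(N_G(x)\cup\{x\})$, where $N_G(x)$ is the set of neighbours of $x$; $G\setminus U$ deletes the vertices of $U$ and incident edges. A graph $H$ is $k$-shellable if its independence complex $\Delta_H$ (faces: sets of pairwise non-adjacent vertices) is. $\langle F_1,\ldots,F_s\rangle$ denotes the complex with facets $F_1,\dots,F_s$. A complex $\Gamma$ of dimension $d$ is $k$-shellable ($1\le k\le d+1$) if its facets can be ordered $F_1,\ldots,F_r$ such that for every $j=2,\ldots,r$, $\Gamma_j=\langle F_j\rangle\cap\langle F_1,\ldots,F_{j-1}\rangle$ satisfies (i) $\Gamma_j$ is generated by a nonempty set of faces of $\langle F_j\rangle$ of dimension $|F_j|-k-1$; (ii) if $\Gamma_j$ has more than one facet, then for every two distinct facets $\sigma,\tau$ of $\Gamma_j$, $F_j\subseteq\sigma\cup\tau$. *)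

From mathcomp Require Import all_boot.
Set Implicit Arguments. Unset Strict Implicit. Unset Printing Implicit Defensive.

(* A simplicial complex on the finite ground type T is represented by its set
   of faces, a {set {set T}}. *)

Definition facets (T : finType) (D : {set {set T}}) : {set {set T}} :=
  [set F in D | [forall G in D, (F \subset G) ==> (G == F)]].

Definition gen_seq (T : finType) (s : seq {set T}) : {set {set T}} :=
  \bigcup_(F <- s) powerset F.

Definition gen_set (T : finType) (A : {set {set T}}) : {set {set T}} :=
  \bigcup_(F in A) powerset F.

(* k-shellability, as in the paper: an ordering F_1,...,F_r of the facets
   (here the list s, indexed from 0) such that for every j >= 2 the complex
   Gamma_j = <F_j> /\ <F_1,...,F_{j-1}> satisfies (i) and (ii).
   A face of dimension |F_j|-k-1 is a face of cardinality |F_j|-k, i.e. a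
   sigma with #|sigma| + k = #|F_j|. *)
Definition k_shellable (T : finType) (k : nat) (D : {set {set T}}) : Prop :=
  0 < k /\
  exists s : seq {set T},
    [/\ uniq s,
        (forall F, (F \in s) = (F \in facets D)) &
        forall j, 0 < j < size s ->
          let Fj := nth set0 s j in
          let Gam := powerset Fj :&: gen_seq (take j s) in
          (exists Gs : {set {set T}},
              [/\ Gs != set0,
                  (forall sg, sg \in Gs -> (sg \subset Fj) /\ #|sg| + k = #|Fj|) &
                  Gam = gen_set Gs]) /\
          (1 < #|facets Gam| ->
             forall sg tau, sg \in facets Gam -> tau \in facets Gam -> sg != tau ->
               Fj \subset sg :|: tau)].

(* A simple graph: vertex set V (a subset of the finite type T) and an
   adjacency relation e (assumed symmetric and irreflexive in the theorem). *)

Definition indep_complex (T : finType) (V : {set T}) (e : rel T) : {set {set T}} :=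
  [set F : {set T} | (F \subset V) &&
     [forall x in F, [forall y in F, ~~ e x y]]].

Definition nbhd (T : finType) (V : {set T}) (e : rel T) (x : T) : {set T} :=
  [set y in V | e x y].

Definition closed_nbhd (T : finType) (V : {set T}) (e : rel T) (S : {set T}) : {set T} :=
  \bigcup_(x in S) (x |: nbhd V e x).

(* G \ U is the graph (V :\: U, e) : induced subgraph on the remaining vertices *)

From mathcomp Require Import all_boot.
Set Implicit Arguments.
Unset Strict Implicit.
Unset Printing Implicit Defensive.

(* A set tau is independent in G \ N_G[S] iff it is disjoint from S and
   tau :|: S is independent in G, i.e. the independence complex of
   G \ N_G[S] is the link of S in that of G.  Links of k-shellable complexes
   are k-shellable: keep, in order, the facets of a k-shelling that contain S
   and remove S from each.  Taking links commutes with intersections and with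
   generating complexes, so the new Gamma_j is the link of S in the old one;
   its generators of the right size are the old ones containing S, minus S,
   and its facets are the old facets containing S, minus S, whence (ii). *)

Section SetFacts.
Variable T : finType.
Implicit Types A B : {set T}.

Lemma setDUK A B : B \subset A -> (A :\: B) :|: B = A.
Proof. by move=> BA; rewrite setUC setDE setUIr setUCr setIT; apply/setUidPr. Qed.

Lemma setUDK A B : [disjoint A & B] -> (A :|: B) :\: B = A.
Proof. by move=> AB; rewrite setDUl setDv setU0; apply/setDidPl. Qed.

Lemma disjoint_setD A B : [disjoint A :\: B & B].
Proof. by rewrite -setI_eq0 setIDAC setDIl setDv setI0. Qed.

End SetFacts.

Section Link.
Variable T : finType.
Implicit Types (S A F sg tau : {set T}) (D E : {set {set T}}).

Definition link D S : {set {set T}} :=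
  [set tau : {set T} | [disjoint tau & S] && (tau :|: S \in D)].

Lemma in_link D S tau :
  (tau \in link D S) = [disjoint tau & S] && (tau :|: S \in D).
Proof. by rewrite inE. Qed.

Lemma mem0_link D S : (set0 \in link D S) = (S \in D).
Proof. by rewrite in_link set0U disjoints_subset sub0set. Qed.

Lemma link0 S : link set0 S = set0.
Proof. by apply/setP => tau; rewrite in_link !inE andbF. Qed.

Lemma linkU D E S : link (D :|: E) S = link D S :|: link E S.
Proof. by apply/setP => tau; rewrite !(inE, in_link) andb_orr. Qed.

Lemma linkI D E S : link (D :&: E) S = link D S :&: link E S.
Proof. by apply/setP => tau; rewrite !(inE, in_link) andbACA andbb. Qed.

Lemma link_powerset A S :
  link (powerset A) S = if S \subset A then powerset (A :\: S) else set0.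
Proof.
apply/setP => tau; rewrite in_link powersetE subUset.
case: ifP => SA; rewrite ?inE ?powersetE ?subsetD ?SA ?andbF //.
by rewrite andbT andbC.
Qed.

Lemma link_bigcup (I : Type) (r : seq I) (P : pred I) (Ds : I -> {set {set T}}) S :
  link (\bigcup_(i <- r | P i) Ds i) S = \bigcup_(i <- r | P i) link (Ds i) S.
Proof. exact: (big_morph (link^~ S) (fun D E => linkU D E S) (link0 S)). Qed.

Lemma mem0_gen_seq (l : seq {set T}) : (set0 \in gen_seq l) = (l != [::]).
Proof. by case: l => [|F l]; rewrite /gen_seq ?big_nil ?big_cons !inE ?sub0set. Qed.

Lemma link_gen_seq (l : seq {set T}) S :
  link (gen_seq l) S = gen_seq [seq F :\: S | F <- l & S \subset F].
Proof.
rewrite /gen_seq link_bigcup big_map big_filter [RHS]big_mkcond.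
by apply: eq_bigr => F _; rewrite link_powerset.
Qed.

Lemma link_gen_set (Gs : {set {set T}}) S :
  link (gen_set Gs) S = gen_set [set sg :\: S | sg in Gs & S \subset sg].
Proof.
rewrite /gen_set link_bigcup big_imset_idem; last exact: setUid.
under [RHS]eq_bigl => sg do rewrite inE.
by rewrite [RHS]big_mkcondr; apply: eq_bigr => F _; rewrite link_powerset.
Qed.

Lemma facetsP D F :
  reflect (F \in D /\ {in D, forall G : {set T}, F \subset G -> G = F})
          (F \in facets D).
Proof.
rewrite inE; apply: (iffP andP) => -[FD maxF]; split=> //.
  by move=> G GD FG; move/forall_inP/(_ G GD)/implyP/(_ FG)/eqP: maxF.
by apply/forall_inP => G GD; apply/implyP => /(maxF G GD) ->.
Qed.

Lemma mem_facets_link D S F :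
  (F \in facets (link D S)) = [disjoint F & S] && (F :|: S \in facets D).
Proof.
apply/facetsP/andP => [[FL maxF] | [dFS /facetsP[FSD maxFS]]].
  move: FL; rewrite in_link => /andP[dFS FSD]; split=> //.
  apply/facetsP; split=> // G GD FSG.
  have SG : S \subset G := subset_trans (subsetUr F S) FSG.
  have GSL : G :\: S \in link D S by rewrite in_link disjoint_setD setDUK.
  have FGS : F \subset G :\: S.
    by rewrite subsetD dFS andbT; apply: subset_trans (subsetUl F S) FSG.
  by rewrite -(maxF _ GSL FGS) setDUK.
split; first by rewrite in_link dFS.
move=> G; rewrite in_link => /andP[dGS GSD] FG.
by rewrite -(setUDK dGS) (maxFS _ GSD (setSU S FG)) setUDK.
Qed.

End Link.

Lemma nth_take_filter (X : Type) x0 (P : pred X) (s : seq X) i :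
  i < size (filter P s) ->
  exists2 j, i <= j < size s &
    [/\ P (nth x0 s j), nth x0 (filter P s) i = nth x0 s j &
        take i (filter P s) = filter P (take j s)].
Proof.
elim: s i => [|a s IHs] i //=.
case Pa: (P a) => /=; last first.
  case/IHs => j /andP[ij js] [Pj nthj takej].
  by exists j.+1; rewrite /= ?Pa ?ltnS ?js ?leqW.
case: i => [|i] /=; first by exists 0.
rewrite ltnS => /IHs[j /andP[ij js] [Pj nthj takej]].
by exists j.+1; rewrite /= ?Pa ?takej ?ltnS ?ij.
Qed.

Section Shelling.
Variable T : finType.
Implicit Types (S F sg tau : {set T}) (Gam : {set {set T}}).

Definition shelling_step k F Gam : Prop :=
  (exists Gs : {set {set T}},
      [/\ Gs != set0,
          (forall sg, sg \in Gs -> (sg \subset F) /\ #|sg| + k = #|F|) &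
          Gam = gen_set Gs]) /\
  (1 < #|facets Gam| ->
     forall sg tau, sg \in facets Gam -> tau \in facets Gam -> sg != tau ->
       F \subset sg :|: tau).

Lemma shelling_step_link k F Gam S :
  S \subset F -> S \in Gam -> shelling_step k F Gam ->
  shelling_step k (F :\: S) (link Gam S).
Proof.
move=> SF SGam [[Gs [Gs_neq0 Gs_sub GamE]] Gam_sep]; split.
  exists [set sg :\: S | sg in Gs & S \subset sg]; split.
  - have : S \in gen_set Gs by rewrite -GamE.
    case/bigcupP => sg sgGs; rewrite powersetE => Ssg.
    by apply/set0Pn; exists (sg :\: S); apply/imsetP; exists sg; rewrite ?inE ?sgGs.
  - move=> sg' /imsetP[sg]; rewrite inE => /andP[sgGs Ssg] ->.
    have [sgF card_sg] := Gs_sub sg sgGs; split; first exact: setSD.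
    by rewrite !cardsDS // addnC addnBA ?subset_leq_card // addnC card_sg.
  - by rewrite GamE link_gen_set.
move=> _ sg tau; rewrite !mem_facets_link.
move=> /andP[dsgS sgSF] /andP[dtauS tauSF] sg_neq_tau.
have neqS : sg :|: S != tau :|: S.
  by apply: contraNneq sg_neq_tau => eqS; rewrite -(setUDK dsgS) eqS setUDK.
have gt1 : 1 < #|facets Gam| by apply/card_gt1P; exists (sg :|: S), (tau :|: S).
move/(Gam_sep gt1 _ _ sgSF tauSF): neqS => Fsep.
rewrite subDset; apply: subset_trans Fsep _.
by rewrite setUACA setUid setUC.
Qed.

End Shelling.

Lemma k_shellable_link (T : finType) k (D : {set {set T}}) (S : {set T}) :
  k_shellable k D -> k_shellable k (link D S).
Proof.
case=> k_gt0 [s [uniq_s facets_s step_s]]; split=> //.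
set s' := [seq F :\: S | F : {set T} <- s & S \subset F].
exists s'; split.
- rewrite map_inj_in_uniq ?filter_uniq // => F G.
  rewrite !mem_filter => /andP[SF _] /andP[SG _] eqFG.
  by rewrite -(setDUK SF) -(setDUK SG) eqFG.
- move=> F; rewrite mem_facets_link; apply/mapP/andP => [[F0] | [dFS]].
    rewrite mem_filter -facets_s => /andP[SF0 F0D] ->.
    by rewrite disjoint_setD setDUK.
  rewrite -facets_s => FSs; exists (F :|: S); last by rewrite setUDK.
  by rewrite mem_filter subsetUr.
move=> i; rewrite size_map => /andP[i_gt0 lt_i].
change (shelling_step k (nth set0 s' i)
                      (powerset (nth set0 s' i) :&: gen_seq (take i s'))).
have [j /andP[le_ij lt_j] [SFj nth_j take_j]] := nth_take_filter set0 lt_i.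
have step_j : shelling_step k (nth set0 s j)
                            (powerset (nth set0 s j) :&: gen_seq (take j s)).
  by apply: step_s; rewrite lt_j (leq_trans i_gt0 le_ij).
have link_Gam : powerset (nth set0 s' i) :&: gen_seq (take i s') =
                link (powerset (nth set0 s j) :&: gen_seq (take j s)) S.
  rewrite linkI link_powerset SFj link_gen_seq /s' (nth_map set0) // nth_j.
  by rewrite -map_take take_j.
rewrite link_Gam (nth_map set0) // nth_j; apply: shelling_step_link => //.
rewrite -mem0_link -link_Gam inE powersetE sub0set mem0_gen_seq.
by rewrite -size_eq0 size_take size_map lt_i -lt0n.
Qed.

Section IndependenceComplex.
Variables (T : finType) (e : rel T).
Implicit Types (V S F : {set T}).

Lemma indep_complexP V F :
  reflect (F \subset V /\ {in F &, forall x y, ~~ e x y}) (F \in indep_complex V e).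
Proof.
rewrite inE; apply: (iffP andP) => -[FV indF]; split=> //.
  by move=> x y xF yF; move/forall_inP/(_ x xF)/forall_inP/(_ y yF): indF.
by apply/forall_inP => x xF; apply/forall_inP => y yF; apply: indF.
Qed.

Lemma in_setD_closed_nbhd V S x :
  (x \in V :\: closed_nbhd V e S) =
    [&& x \in V, x \notin S & [forall y in S, ~~ e y x]].
Proof.
rewrite inE andbC; case xV: (x \in V) => //=.
apply/negP/andP => [nNx | [xS /forall_inP nadj] /bigcupP[y yS]].
  split.
    by apply/negP => xS; apply: nNx; apply/bigcupP; exists x; rewrite ?setU11.
  apply/forall_inP => y yS; apply/negP => eyx; apply: nNx.
  by apply/bigcupP; exists y; rewrite // !inE xV eyx orbT.
rewrite !inE xV /= => /orP[/eqP xy | eyx]; first by rewrite xy yS in xS.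
by move: (nadj y yS); rewrite eyx.
Qed.

Lemma indep_complex_setD_closed_nbhd V S :
  symmetric e -> S \subset V -> {in S &, forall x y, ~~ e x y} ->
  indep_complex (V :\: closed_nbhd V e S) e = link (indep_complex V e) S.
Proof.
move=> e_sym SV indS; apply/setP => tau; rewrite in_link.
apply/indep_complexP/andP => [[tauN indtau] | [dtauS /indep_complexP[tauSV indtauS]]].
  have tau_out x : x \in tau -> [&& x \in V, x \notin S & [forall y in S, ~~ e y x]].
    by move/(subsetP tauN); rewrite in_setD_closed_nbhd.
  split.
    rewrite disjoints_subset; apply/subsetP => x /tau_out/and3P[_ xS _].
    by rewrite inE.
  apply/indep_complexP; split.
    by rewrite subUset SV andbT; apply/subsetP => x /tau_out/and3P[].
  move=> x y; rewrite !inE => /orP[xt | xS] /orP[yt | yS]; first exact: indtau.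
  - by move/tau_out/and3P: xt => [_ _ /forall_inP/(_ y yS)]; rewrite e_sym.
  - by move/tau_out/and3P: yt => [_ _ /forall_inP/(_ x xS)].
  - exact: indS.
have tauS x : x \in tau -> x \in tau :|: S by move=> xt; rewrite inE xt.
split; last by move=> x y /tauS xt /tauS yt; apply: indtauS.
apply/subsetP => x xt; rewrite in_setD_closed_nbhd (subsetP tauSV _ (tauS x xt)).
rewrite (disjointFr dtauS xt) /=; apply/forall_inP => y yS.
by apply: indtauS; rewrite inE ?yS ?xt ?orbT.
Qed.

End IndependenceComplex.

Theorem corollary4p5 (T : finType) (V : {set T}) (e : rel T) (S : {set T}) (k : nat) :
  symmetric e -> irreflexive e ->
  S \subset V ->
  (forall x y, x \in S -> y \in S -> ~~ e x y) ->
  k_shellable k (indep_complex V e) ->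
  k_shellable k (indep_complex (V :\: closed_nbhd V e S) e).
Proof.
move=> e_sym _ SV indS shellable.
by rewrite indep_complex_setD_closed_nbhd //; apply: k_shellable_link.
Qed.
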